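(* In the full-information setting, let $\beta=\frac1K$ and run Gaptron with gap map $a(\mathbf W_t,\mathbf x_t)=1-\max\{\mathbb 1[m_t^\star>\beta],\,m_t^\star\}$, learning rate $\eta=\frac{1-\beta}{KX^2}$, exploration rate $\gamma=0$, and the multiclass hinge loss $$\ell_t(\mathbf W)=\begin{cases}\max\{1-m_t(\mathbf W,y_t),0\}&\text{if } m_t^\star\le\beta,\\ \max\{1-m_t(\mathbf W,y_t),0\}&\text{if } y_t^\star\ne y_t\text{ and } m_t^\star>\beta,\\ 0&\text{if } y_t^\star=y_t\text{ and } m_t^\star>\beta.\end{cases}$$ Then for every $\mathbf U\in\mathcal W$, $$\mathbb E\Big[\sum_{t=1}^T\mathbb 1[y'_t\ne y_t]\Big]\le\sum_{t=1}^T\ell_t(\mathbf U)+\frac{K^2X^2\|\mathbf U\|^2}{2(K-1)}.$$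
   Context: Setting and notation. Fix integers $K\ge 2$, $d\ge1$, $T\ge1$ and reals $X>0$, $D>0$. Matrices $\mathbf W\in\mathbb{R}^{K\times d}$ have rows $\mathbf W^1,\dots,\mathbf W^K\in\mathbb{R}^d$ and are identified with vectors in $\mathbb{R}^{Kd}$; $\langle\cdot,\cdot\rangle$ is the Euclidean inner product and $\|\cdot\|$ the Euclidean (Frobenius) norm. $\mathcal W=\{\mathbf W:\|\mathbf W\|\le D\}$. $\mathbf e_k$ is the $k$-th standard basis vector of $\mathbb R^K$ and $\mathbf 1\in\mathbb R^K$ the all-ones vector. In each round $t=1,\dots,T$ the environment chooses a label $y_t\in\{1,\dots,K\}$ and a feature vector $\mathbf x_t\in\mathbb R^d$ with $\|\mathbf x_t\|\le X$ (possibly depending on the learner's past predictions $y'_1,\dots,y'_{t-1}$ but not on its current random draw); the learner sees $\mathbf x_t$, outputs a random label $y'_t$, and then observes $y_t$ (full-information setting) or only $\mathbb 1[y'_t\ne y_t]$ (bandit setting). Gaptron, with learning rate $\eta>0$, exploration rate $\gamma\in[0,1]$, gap map $a:\mathbb R^{K\times d}\times\mathbb R^d\to[0,1]$ and loss functions $\ell_t$: set $\mathbf W_1=\mathbf 0$; for $t=1,\dots,T$: let $y_t^\star=\arg\max_k\langle \mathbf W_t^k,\mathbf x_t\rangle$ (ties broken arbitrarily), $a_t=a(\mathbf W_t,\mathbf x_t)$, $\mathbf p'_t=(1-\max\{a_t,\gamma\})\mathbf e_{y_t^\star}+\max\{a_t,\gamma\}\frac1K\mathbf 1$; draw $y'_t\sim\mathbf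 p'_t$ ($p'_t(k)$ denotes the probability of label $k$); set $\mathbf g_t=\nabla\ell_t(\mathbf W_t)$; update $\mathbf W_{t+1}=\arg\min_{\mathbf W\in\mathcal W}\ \eta\langle\mathbf g_t,\mathbf W\rangle+\frac12\|\mathbf W-\mathbf W_t\|^2$. $\mathbb E$ denotes expectation over the learner's randomization. Margins: $m_t(\mathbf W,y)=\langle\mathbf W^y,\mathbf x_t\rangle-\max_{k\ne y}\langle\mathbf W^k,\mathbf x_t\rangle$ and $m_t^\star=\max_k m_t(\mathbf W_t,k)$, where $\mathbf W_t$ is Gaptron's current iterate; in the definition of $\ell_t$ the case distinction uses $y_t^\star$ and $m_t^\star$ computed from $\mathbf W_t$, so $\ell_t$ is, as a function of $\mathbf W$, either $\max\{1-m_t(\mathbf W,y_t),0\}$ or identically $0$. The gradient used is $\mathbf g_t=(\mathbf e_{\tilde k}-\mathbf e_{y_t})\otimes\mathbf x_t$ with $\tilde k=\arg\max_{k\ne y_t}\langle\mathbf W_t^k,\mathbf x_t\rangle$ in the first two cases and $\mathbf g_t=\mathbf 0$ in the third, where $\mathbf v\otimes\mathbf x$ is the $K\times d$ matrix with rows $v_k\mathbf x$. *)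

From mathcomp Require Import all_boot all_order all_algebra.
From mathcomp Require Import reals.
Set Implicit Arguments. Unset Strict Implicit. Unset Printing Implicit Defensive.
Import Order.TTheory GRing.Theory Num.Theory.
Local Open Scope ring_scope.

(* Matrices W : 'M[R]_(K,d) (row k = W^k), features x : 'rV[R]_d,
   labels in 'I_K (label k+1 of the paper is the ordinal k). *)

Definition frob (R : realType) (K d : nat) (A B : 'M[R]_(K, d)) : R :=
  \sum_(i < K) \sum_(j < d) A i j * B i j.
Definition sqnorm (R : realType) (K d : nat) (A : 'M[R]_(K, d)) : R := frob A A.
Definition vsqnorm (R : realType) (d : nat) (x : 'rV[R]_d) : R :=
  \sum_(j < d) x 0 j ^+ 2.

Definition score (R : realType) (K d : nat) (W : 'M[R]_(K, d)) (x : 'rV[R]_d)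
  (k : 'I_K) : R := \sum_(j < d) W k j * x 0 j.

(* max_{i : P i} F i ; the seed  -(sum |F i|)  is below every F i, so this is
   the true maximum whenever P is nonempty (always the case below, K >= 2). *)
Definition fmax (R : realType) (K : nat) (P : pred 'I_K) (F : 'I_K -> R) : R :=
  \big[Num.max/ - \sum_(i < K | P i) `|F i|]_(i < K | P i) F i.

Definition margin (R : realType) (K d : nat) (W : 'M[R]_(K, d)) (x : 'rV[R]_d)
  (y : 'I_K) : R := score W x y - fmax (fun k => k != y) (score W x).

Definition mstar (R : realType) (K d : nat) (W : 'M[R]_(K, d)) (x : 'rV[R]_d) : R :=
  fmax predT (margin W x).

Definition hinge (R : realType) (K d : nat) (x : 'rV[R]_d) (y : 'I_K)
  (U : 'M[R]_(K, d)) : R := Num.max (1 - margin U x y) 0.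

Definition gbeta (R : realType) (K : nat) : R := 1 / K%:R.
Definition geta (R : realType) (K : nat) (X : R) : R :=
  (1 - gbeta R K) / (K%:R * X ^+ 2).

(* tie-breaking rules: ys W x is an argmax_k <W^k,x>;
   kt W x y is an argmax_{k<>y} <W^k,x>  *)
Definition is_argmax_rule (R : realType) (K d : nat)
  (ys : 'M[R]_(K, d) -> 'rV[R]_d -> 'I_K) : Prop :=
  forall W x k, score W x k <= score W x (ys W x).
Definition is_argmax_other_rule (R : realType) (K d : nat)
  (kt : 'M[R]_(K, d) -> 'rV[R]_d -> 'I_K -> 'I_K) : Prop :=
  forall W x y, kt W x y != y /\
    forall k, k != y -> score W x k <= score W x (kt W x y).

Definition is_prox_update (R : realType) (K d : nat) (eta D : R)
  (upd : 'M[R]_(K, d) -> 'M[R]_(K, d) -> 'M[R]_(K, d)) : Prop :=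
  forall W G, sqnorm (upd W G) <= D ^+ 2 /\
    forall V, sqnorm V <= D ^+ 2 ->
      eta * frob G (upd W G) + 2^-1 * sqnorm (upd W G - W)
      <= eta * frob G V + 2^-1 * sqnorm (V - W).

(* first two cases of the definition of l_t (where l_t is the hinge) *)
Definition active (R : realType) (K d : nat)
  (ys : 'M[R]_(K, d) -> 'rV[R]_d -> 'I_K)
  (W : 'M[R]_(K, d)) (x : 'rV[R]_d) (y : 'I_K) : bool :=
  (mstar W x <= gbeta R K) || (ys W x != y).

Definition loss (R : realType) (K d : nat)
  (ys : 'M[R]_(K, d) -> 'rV[R]_d -> 'I_K)
  (W : 'M[R]_(K, d)) (x : 'rV[R]_d) (y : 'I_K) (U : 'M[R]_(K, d)) : R :=
  if active ys W x y then hinge x y U else 0.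

Definition grad (R : realType) (K d : nat)
  (ys : 'M[R]_(K, d) -> 'rV[R]_d -> 'I_K)
  (kt : 'M[R]_(K, d) -> 'rV[R]_d -> 'I_K -> 'I_K)
  (W : 'M[R]_(K, d)) (x : 'rV[R]_d) (y : 'I_K) : 'M[R]_(K, d) :=
  if active ys W x y then
    \matrix_(i < K, j < d) (((i == kt W x y)%:R - (i == y)%:R) * x 0 j)
  else 0.

Definition gap (R : realType) (K d : nat) (W : 'M[R]_(K, d)) (x : 'rV[R]_d) : R :=
  1 - Num.max ((gbeta R K < mstar W x)%R)%:R (mstar W x).

Definition pprob (R : realType) (K d : nat) (gamma : R)
  (ys : 'M[R]_(K, d) -> 'rV[R]_d -> 'I_K)
  (W : 'M[R]_(K, d)) (x : 'rV[R]_d) (k : 'I_K) : R :=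
  let c := Num.max (gap W x) gamma in
  (1 - c) * (k == ys W x)%:R + c / K%:R.

(* The adaptive environment: given the learner's past predictions h
   (a sequence of length t-1), it chooses x_t = xe h and y_t = ye h.
   Witer n h = W_{n+1} (0-indexed round n), computed along the history h;
   it only depends on the first n entries of h. *)
Fixpoint Witer (R : realType) (K d : nat)
  (xe : seq 'I_K -> 'rV[R]_d) (ye : seq 'I_K -> 'I_K)
  (ys : 'M[R]_(K, d) -> 'rV[R]_d -> 'I_K)
  (kt : 'M[R]_(K, d) -> 'rV[R]_d -> 'I_K -> 'I_K)
  (upd : 'M[R]_(K, d) -> 'M[R]_(K, d) -> 'M[R]_(K, d))
  (n : nat) (h : seq 'I_K) : 'M[R]_(K, d) :=
  match n with
  | 0 => 0
  | n'.+1 =>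
      let W := Witer xe ye ys kt upd n' h in
      let hp := take n' h in
      upd W (grad ys kt W (xe hp) (ye hp))
  end.

Definition path_prob (R : realType) (K d T : nat) (gamma : R)
  (xe : seq 'I_K -> 'rV[R]_d) (ye : seq 'I_K -> 'I_K)
  (ys : 'M[R]_(K, d) -> 'rV[R]_d -> 'I_K)
  (kt : 'M[R]_(K, d) -> 'rV[R]_d -> 'I_K -> 'I_K)
  (upd : 'M[R]_(K, d) -> 'M[R]_(K, d) -> 'M[R]_(K, d))
  (h : T.-tuple 'I_K) : R :=
  \prod_(t < T) pprob gamma ys (Witer xe ye ys kt upd t h) (xe (take t h)) (tnth h t).

Definition Expect (R : realType) (K d T : nat) (gamma : R)
  (xe : seq 'I_K -> 'rV[R]_d) (ye : seq 'I_K -> 'I_K)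
  (ys : 'M[R]_(K, d) -> 'rV[R]_d -> 'I_K)
  (kt : 'M[R]_(K, d) -> 'rV[R]_d -> 'I_K -> 'I_K)
  (upd : 'M[R]_(K, d) -> 'M[R]_(K, d) -> 'M[R]_(K, d))
  (f : T.-tuple 'I_K -> R) : R :=
  \sum_(h : T.-tuple 'I_K) path_prob gamma xe ye ys kt upd h * f h.

Definition mistakes (R : realType) (K T : nat) (ye : seq 'I_K -> 'I_K)
  (h : T.-tuple 'I_K) : R :=
  \sum_(t < T) (tnth h t != ye (take t h))%:R.

Definition cum_loss (R : realType) (K d T : nat)
  (xe : seq 'I_K -> 'rV[R]_d) (ye : seq 'I_K -> 'I_K)
  (ys : 'M[R]_(K, d) -> 'rV[R]_d -> 'I_K)
  (kt : 'M[R]_(K, d) -> 'rV[R]_d -> 'I_K -> 'I_K)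
  (upd : 'M[R]_(K, d) -> 'M[R]_(K, d) -> 'M[R]_(K, d))
  (U : 'M[R]_(K, d)) (h : T.-tuple 'I_K) : R :=
  \sum_(t < T) loss ys (Witer xe ye ys kt upd t h) (xe (take t h)) (ye (take t h)) U.

From mathcomp Require Import all_boot all_order all_algebra.
From mathcomp Require Import reals.
From mathcomp Require Import ring lra.
Import Order.TTheory GRing.Theory Num.Theory.
Local Open Scope ring_scope.
Set Implicit Arguments. Unset Strict Implicit.

(* The proof is the surrogate-loss argument of online gradient descent.
   1. Per round, with g_t the gradient used by Gaptron,
        (1 - p'_t(y_t)) + eta/2 ||g_t||^2 + <g_t, U - W_t> <= l_t(U);
      this is a case analysis on the maximal margin m*_t and on y*_t = y_t,
      using ||g_t||^2 = 2 ||x_t||^2 and eta X^2 = beta (1 - beta).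
   2. The three-point inequality of the projected step turns 1. into
      eta (1 - p'_t(y_t)) <= eta l_t(U) + ||U - W_t||^2/2 - ||U - W_{t+1}||^2/2,
      which telescopes along every history of predictions.
   3. Since the environment only sees past predictions, the expected number of
      mistakes is the expectation of sum_t (1 - p'_t(y_t)) (tower rule), and
      the pathwise bound of 2. integrates to the theorem. *)

Section Frobenius.
Variables (R : realType) (K d : nat).
Implicit Types A B C : 'M[R]_(K, d).

Lemma frobDl A B C : frob (A + B) C = frob A C + frob B C.
Proof.
rewrite /frob -big_split; apply: eq_bigr => i _.
by rewrite -big_split; apply: eq_bigr => j _; rewrite mxE mulrDl.
Qed.

Lemma frobC A B : frob A B = frob B A.
Proof. by rewrite /frob; apply: eq_bigr => i _; apply: eq_bigr => j _; rewrite mulrC. Qed.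

Lemma frobDr A B C : frob C (A + B) = frob C A + frob C B.
Proof. by rewrite frobC frobDl !(frobC C). Qed.

Lemma frobZl a A B : frob (a *: A) B = a * frob A B.
Proof.
rewrite /frob mulr_sumr; apply: eq_bigr => i _.
by rewrite mulr_sumr; apply: eq_bigr => j _; rewrite mxE mulrA.
Qed.

Lemma frobZr a A B : frob B (a *: A) = a * frob B A.
Proof. by rewrite frobC frobZl frobC. Qed.

Lemma frobBl A B C : frob (A - B) C = frob A C - frob B C.
Proof. by rewrite -scaleN1r frobDl frobZl mulN1r. Qed.

Lemma frobBr A B C : frob C (A - B) = frob C A - frob C B.
Proof. by rewrite frobC frobBl !(frobC C). Qed.

Lemma frob0l A : frob 0 A = 0.
Proof. by rewrite -(scale0r 0) frobZl mul0r. Qed.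

Lemma sqnorm_ge0 A : 0 <= sqnorm A.
Proof. by apply: sumr_ge0 => i _; apply: sumr_ge0 => j _; rewrite -expr2 sqr_ge0. Qed.

Lemma sqnormD A B : sqnorm (A + B) = sqnorm A + 2 * frob A B + sqnorm B.
Proof. by rewrite /sqnorm !frobDl !frobDr (frobC B A); ring. Qed.

Lemma sqnormZ a A : sqnorm (a *: A) = a ^+ 2 * sqnorm A.
Proof. by rewrite /sqnorm frobZl frobZr; ring. Qed.

End Frobenius.

Lemma ball_convex (R : realType) (K d : nat) (D l : R) (S V : 'M[R]_(K, d)) :
  sqnorm S <= D ^+ 2 -> sqnorm V <= D ^+ 2 -> 0 <= l -> l <= 1 ->
  sqnorm (S + l *: (V - S)) <= D ^+ 2.
Proof.
move=> hS hV l0 l1; set Dl := V - S.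
have eV : sqnorm V = sqnorm S + 2 * frob S Dl + sqnorm Dl.
  by rewrite -sqnormD /Dl addrC subrK.
have hDl := sqnorm_ge0 Dl.
have hl : 0 <= l * (1 - l) by apply: mulr_ge0; lra.
rewrite sqnormD frobZr sqnormZ.
nra.
Qed.

Lemma slope_ge0 (R : realFieldType) (A B : R) : 0 <= B ->
  (forall l, 0 < l -> l <= 1 -> 0 <= l * A + l ^+ 2 * B) -> 0 <= A.
Proof.
move=> B0 hquad; rewrite leNgt; apply/negP => A0.
have BA : 0 < B - A by lra.
set l := - A / (B - A).
have el : l * (B - A) = - A by rewrite mulfVK // gt_eqF.
have l0 : 0 < l by rewrite divr_gt0 // oppr_gt0.
have l1 : l <= 1 by rewrite ler_pdivrMr // mul1r; lra.
have e2 : l * A + l ^+ 2 * B = l ^+ 2 * A.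
  have lB : l * B = l * A - A by rewrite mulrBr in el; lra.
  by rewrite expr2 -mulrA lB; ring.
by have := hquad l l0 l1; rewrite e2 pmulr_rge0 ?exprn_gt0 //; lra.
Qed.

Section ProximalStep.
Variables (R : realType) (K d : nat) (eta D : R).
Variable upd : 'M[R]_(K, d) -> 'M[R]_(K, d) -> 'M[R]_(K, d).
Hypothesis hupd : is_prox_update eta D upd.

Lemma prox_variational W G V : sqnorm V <= D ^+ 2 ->
  0 <= eta * frob G (V - upd W G) + frob (upd W G - W) (V - upd W G).
Proof.
have [hS hmin] := hupd W G; set S := upd W G in hS hmin *; set Dl := V - S.
move=> hV; apply: (slope_ge0 (B := 2^-1 * sqnorm Dl)) => [|l l0 l1].
  by rewrite mulr_ge0 ?invr_ge0 ?ler0n ?sqnorm_ge0.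
have := hmin _ (ball_convex hS hV (ltW l0) l1).
have -> : S + l *: Dl - W = (S - W) + l *: Dl by rewrite addrAC.
rewrite frobDr (sqnormD (S - W)) sqnormZ !frobZr; lra.
Qed.

Lemma prox_three_point W G V : sqnorm V <= D ^+ 2 ->
  eta * frob G (upd W G) + 2^-1 * sqnorm (upd W G - W)
    + 2^-1 * sqnorm (V - upd W G)
  <= eta * frob G V + 2^-1 * sqnorm (V - W).
Proof.
move=> /(prox_variational W G); set S := upd W G => hvar.
have -> : V - W = (S - W) + (V - S) by rewrite [RHS]addrC addrA subrK.
have {2}-> : V = S + (V - S) by rewrite addrC subrK.
by rewrite (sqnormD (S - W)) (frobDr S); lra.
Qed.

End ProximalStep.

Lemma fmax_ge (R : realType) (K : nat) (P : pred 'I_K) (F : 'I_K -> R) i :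
  P i -> F i <= fmax P F.
Proof. by move=> Pi; rewrite /fmax (bigD1 i) //= le_max lexx. Qed.

Lemma fmax_le (R : realType) (K : nat) (P : pred 'I_K) (F : 'I_K -> R) c i0 :
  P i0 -> (forall i, P i -> F i <= c) -> fmax P F <= c.
Proof.
move=> P0 hc; apply: (big_ind (fun v => v <= c)) => [|u v hu hv|]; last exact: hc.
- apply: le_trans (hc _ P0); apply: le_trans (_ : - `|F i0| <= _).
    by rewrite lerN2 (bigD1 i0) //= lerDl sumr_ge0.
  by rewrite lerNl -normrN ler_norm.
- by rewrite ge_max hu hv.
Qed.

Section Margins.
Variables (R : realType) (K d : nat).
Variables (ys : 'M[R]_(K, d) -> 'rV[R]_d -> 'I_K).
Variables (kt : 'M[R]_(K, d) -> 'rV[R]_d -> 'I_K -> 'I_K).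
Hypotheses (hys : is_argmax_rule ys) (hkt : is_argmax_other_rule kt).
Implicit Types (W : 'M[R]_(K, d)) (x : 'rV[R]_d) (y k : 'I_K).

Lemma margin_le_gap W x y k :
  k != y -> margin W x y <= score W x y - score W x k.
Proof. by move=> hk; rewrite /margin lerB // (fmax_ge _ hk). Qed.

Lemma margin_kt W x y : margin W x y = score W x y - score W x (kt W x y).
Proof.
have [hne hle] := hkt W x y.
by congr (_ - _); apply/le_anti; rewrite (fmax_le hne) ?(fmax_ge _ hne).
Qed.

Lemma margin_ys_ge0 W x : 0 <= margin W x (ys W x).
Proof. by rewrite margin_kt subr_ge0 hys. Qed.

Lemma mstar_ys W x : mstar W x = margin W x (ys W x).
Proof.
apply/le_anti; rewrite (@fmax_ge _ _ predT) // andbT.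
apply: (@fmax_le _ _ predT _ _ (ys W x)) => // k _.
have [->|hk] := eqVneq k (ys W x); first by [].
rewrite eq_sym in hk; apply: le_trans (@margin_le_gap W x k _ hk) _.
by have := hys W x k; have := margin_ys_ge0 W x; lra.
Qed.

Lemma mstar_ge0 W x : 0 <= mstar W x.
Proof. by rewrite mstar_ys margin_ys_ge0. Qed.

Lemma margin_other W x y : y != ys W x -> margin W x y <= - mstar W x.
Proof.
move=> hy; rewrite mstar_ys.
have h1 := margin_le_gap W x hy.
have := margin_le_gap W x (_ : ys W x != y); rewrite eq_sym => /(_ hy).
lra.
Qed.

End Margins.

Lemma sum_delta (R : realType) (K : nat) (a : 'I_K) (c : 'I_K -> R) :
  \sum_i (i == a)%:R * c i = c a.
Proof.
by rewrite (bigD1 a) //= eqxx mul1r big1 ?addr0 // => i /negbTE ->; rewrite mul0r.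
Qed.

Definition gradmx (R : realType) (K d : nat) (a b : 'I_K) (x : 'rV[R]_d) :
  'M[R]_(K, d) := \matrix_(i < K, j < d) (((i == a)%:R - (i == b)%:R) * x 0 j).

Lemma frob_gradmx (R : realType) (K d : nat) (a b : 'I_K) (x : 'rV[R]_d)
    (M : 'M[R]_(K, d)) :
  frob (gradmx a b x) M = score M x a - score M x b.
Proof.
rewrite /frob /score -!(sum_delta _ (fun i => \sum_j M i j * x 0 j)) -sumrB.
apply: eq_bigr => i _; rewrite -mulrBl mulr_sumr.
by apply: eq_bigr => j _; rewrite mxE; ring.
Qed.

Lemma sqnorm_gradmx (R : realType) (K d : nat) (a b : 'I_K) (x : 'rV[R]_d) :
  a != b -> sqnorm (gradmx a b x) = 2 * vsqnorm x.
Proof.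
move=> hab; rewrite /sqnorm frob_gradmx.
have score_row i : score (gradmx a b x) x i = ((i == a)%:R - (i == b)%:R) * vsqnorm x.
  by rewrite /score /vsqnorm mulr_sumr; apply: eq_bigr => j _; rewrite mxE expr2; ring.
by rewrite !score_row !eqxx (eq_sym b a) (negbTE hab) /=; ring.
Qed.

Section Round.
Variables (R : realType) (K d : nat).
Hypothesis hK : (0 < K)%N.
Variables (ys : 'M[R]_(K, d) -> 'rV[R]_d -> 'I_K).
Variables (kt : 'M[R]_(K, d) -> 'rV[R]_d -> 'I_K -> 'I_K).
Hypotheses (hys : is_argmax_rule ys) (hkt : is_argmax_other_rule kt).
Implicit Types (W U : 'M[R]_(K, d)) (x : 'rV[R]_d) (y : 'I_K).

Local Notation b := (gbeta R K).

Lemma gbeta_gt0 : 0 < b.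
Proof. by rewrite /gbeta div1r invr_gt0 ltr0n. Qed.

Lemma gbeta_le1 : b <= 1.
Proof. by rewrite /gbeta div1r invf_le1 ?ltr0n // ler1n. Qed.

Lemma pprob0E W x k : pprob 0 ys W x k =
  (1 - Num.max (gap W x) 0) * (k == ys W x)%:R + Num.max (gap W x) 0 * b.
Proof. by rewrite /pprob /gbeta div1r. Qed.

Lemma clipped_gap_low W x : mstar W x <= b -> Num.max (gap W x) 0 = 1 - mstar W x.
Proof.
move=> hlow; have ms0 := mstar_ge0 hys hkt W x; have b1 := gbeta_le1.
rewrite /gap ltNge hlow /= (max_idPr ms0); apply/max_idPl; lra.
Qed.

Lemma clipped_gap_high W x : b < mstar W x -> Num.max (gap W x) 0 = 0.
Proof. by move=> hhigh; rewrite /gap hhigh; apply/max_idPr; rewrite subr_le0 le_max lexx. Qed.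

Lemma pprob_inactive W x y : ~~ active ys W x y -> pprob 0 ys W x y = 1.
Proof.
rewrite /active negb_or -ltNge negbK => /andP[hhigh /eqP <-].
by rewrite pprob0E clipped_gap_high // eqxx subr0 mul0r addr0 mulr1.
Qed.

Lemma pprob_active W x y : active ys W x y ->
  (1 - pprob 0 ys W x y) + b * (1 - b) + margin W x y <= 1.
Proof.
have b0 := gbeta_gt0; have b1 := gbeta_le1; have ms0 := mstar_ge0 hys hkt W x.
rewrite /active pprob0E; have [hlow _|hhigh /= hy] := leP (mstar W x) b.
  rewrite clipped_gap_low //; have [->|hy] := eqVneq y (ys W x).
    by rewrite -(mstar_ys hys hkt) mulr1; nra.
  by have := margin_other hys hkt hy; rewrite mulr0 add0r; nra.
rewrite eq_sym in hy; have := margin_other hys hkt hy.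
by rewrite clipped_gap_high // (negbTE hy) mulr0 mul0r addr0; nra.
Qed.

Lemma geta_sqX (X : R) : X != 0 -> geta K X * X ^+ 2 = b * (1 - b).
Proof.
by move=> hX; rewrite /geta /gbeta; field; rewrite hX pnatr_eq0 -lt0n hK.
Qed.

Lemma geta_ge0 (X : R) : 0 <= geta K X.
Proof.
have b1 := gbeta_le1.
by rewrite /geta divr_ge0 ?subr_ge0 // mulr_ge0 ?ler0n ?sqr_ge0.
Qed.

Lemma grad_active W x y : active ys W x y -> grad ys kt W x y = gradmx (kt W x y) y x.
Proof. by rewrite /grad => ->. Qed.

Lemma grad_inactive W x y : ~~ active ys W x y -> grad ys kt W x y = 0.
Proof. by rewrite /grad => /negbTE ->. Qed.

Lemma round_surrogate (X : R) W x y U : 0 < X -> vsqnorm x <= X ^+ 2 ->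
  (1 - pprob 0 ys W x y) + geta K X / 2 * sqnorm (grad ys kt W x y)
    + frob (grad ys kt W x y) (U - W) <= loss ys W x y U.
Proof.
move=> hX hx; rewrite /loss; have [act|inact] := boolP (active ys W x y); last first.
  by rewrite grad_inactive // pprob_inactive // /sqnorm !frob0l; lra.
have [ktne _] := hkt W x y.
rewrite grad_active // frobBr !frob_gradmx sqnorm_gradmx //.
have hmU := margin_le_gap U x ktne.
have hmW := margin_kt hkt W x y.
have hprob := pprob_active act.
have hstep : geta K X * vsqnorm x <= b * (1 - b).
  by rewrite -(geta_sqX (lt0r_neq0 hX)) ler_wpM2l ?geta_ge0.
have hhinge : 1 - margin U x y <= hinge x y U by rewrite /hinge le_max lexx.
lra.
Qed.

End Round.

Section Pathwise.
Variables (R : realType) (K d : nat) (X D : R).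
Variables (xe : seq 'I_K -> 'rV[R]_d) (ye : seq 'I_K -> 'I_K).
Variables (ys : 'M[R]_(K, d) -> 'rV[R]_d -> 'I_K).
Variables (kt : 'M[R]_(K, d) -> 'rV[R]_d -> 'I_K -> 'I_K).
Variables (upd : 'M[R]_(K, d) -> 'M[R]_(K, d) -> 'M[R]_(K, d)) (U : 'M[R]_(K, d)).
Hypotheses (hX : 0 < X) (hxe : forall h, vsqnorm (xe h) <= X ^+ 2).
Hypotheses (hys : is_argmax_rule ys) (hkt : is_argmax_other_rule kt).
Hypotheses (hupd : is_prox_update (geta K X) D upd) (hU : sqnorm U <= D ^+ 2).

Local Notation eta := (geta K X).
Local Notation W_ t h := (Witer xe ye ys kt upd t h).

Lemma round_regret (hK : (0 < K)%N) W x y : vsqnorm x <= X ^+ 2 ->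
  eta * (1 - pprob 0 ys W x y) <=
  eta * loss ys W x y U + 2^-1 * sqnorm (U - W)
    - 2^-1 * sqnorm (U - upd W (grad ys kt W x y)).
Proof.
move=> hx; have := prox_three_point hupd W (grad ys kt W x y) hU.
have := ler_wpM2l (geta_ge0 hK X) (round_surrogate hK hys hkt W y U hX hx).
set g := grad ys kt W x y; set W' := upd W g => hsur h3.
have hsq := sqnorm_ge0 (eta *: g + (W' - W)).
rewrite sqnormD sqnormZ frobZl frobBr in hsq; rewrite frobBr in hsur.
have e2 : eta * (eta / 2 * sqnorm g) = 2^-1 * (eta ^+ 2 * sqnorm g) by ring.
rewrite !mulrDr e2 in hsur; lra.
Qed.

Lemma path_regret (hK : (0 < K)%N) (h : seq 'I_K) n :
  eta * \sum_(t < n) (1 - pprob 0 ys (W_ t h) (xe (take t h)) (ye (take t h)))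
  <= eta * \sum_(t < n) loss ys (W_ t h) (xe (take t h)) (ye (take t h)) U
     + 2^-1 * sqnorm U - 2^-1 * sqnorm (U - W_ n h).
Proof.
elim: n => [|n IH]; first by rewrite !big_ord0 subr0 !mulr0 add0r subrr.
rewrite !big_ord_recr /= !mulrDr.
have := round_regret hK (W_ n h) (ye (take n h)) (hxe (take n h)); lra.
Qed.

(* Along every history, the expected mistakes given the past are bounded by
   the cumulative loss plus K^2 X^2 ||U||^2 / (2(K - 1)) = ||U||^2 / (2 eta). *)
Lemma pathwise_bound (hK : (2 <= K)%N) (h : seq 'I_K) n :
  \sum_(t < n) (1 - pprob 0 ys (W_ t h) (xe (take t h)) (ye (take t h)))
  <= \sum_(t < n) loss ys (W_ t h) (xe (take t h)) (ye (take t h)) U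
     + (K%:R ^+ 2 * X ^+ 2 * sqnorm U) / (2 * (K%:R - 1)).
Proof.
have hk : (2 : R) <= K%:R by rewrite (ler_nat R 2 K).
have eta_gt0 : 0 < eta.
  rewrite /geta /gbeta divr_gt0 ?mulr_gt0 ?exprn_gt0 //; last lra.
  by rewrite subr_gt0 div1r invf_lt1; lra.
have eta_const : eta * ((K%:R ^+ 2 * X ^+ 2 * sqnorm U) / (2 * (K%:R - 1)))
                 = 2^-1 * sqnorm U.
  rewrite /geta /gbeta; field.
  by apply/and3P; split; [lra | exact: lt0r_neq0 | lra].
rewrite -(ler_pM2l eta_gt0) mulrDr eta_const.
have := path_regret (ltnW hK) h n; have := sqnorm_ge0 (U - W_ n h); lra.
Qed.

End Pathwise.

Section HistoryExpectation.
Variables (R : realType) (T0 : finType) (q : seq T0 -> T0 -> R).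
Hypothesis q_sum1 : forall s, \sum_k q s k = 1.

Definition snoc_tuple n (p : n.-tuple T0 * T0) : n.+1.-tuple T0 :=
  [tuple of rcons p.1 p.2].
Definition unsnoc_tuple n (t : n.+1.-tuple T0) : n.-tuple T0 * T0 :=
  ([tuple of belast (thead t) (behead t)], last (thead t) (behead t)).

Lemma tuple_consE n (t : n.+1.-tuple T0) : (t : seq T0) = thead t :: behead t.
Proof. by rewrite {1}(tuple_eta t). Qed.

Lemma sum_tuple_snoc n (F : n.+1.-tuple T0 -> R) :
  \sum_(t : n.+1.-tuple T0) F t
  = \sum_(h : n.-tuple T0) \sum_(x : T0) F (snoc_tuple (h, x)).
Proof.
rewrite pair_big /= (reindex (@snoc_tuple n)) //.
exists (@unsnoc_tuple n) => [[h x] _ | t _]; last first.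
  by apply: val_inj; rewrite /= -lastI -tuple_consE.
set t := snoc_tuple (h, x).
have : rcons (belast (thead t) (behead t)) (last (thead t) (behead t)) = rcons h x.
  by rewrite -lastI -tuple_consE.
by case/rcons_inj => eh ex; rewrite /unsnoc_tuple ex; congr (_, _); apply: val_inj.
Qed.

Lemma big_prefix_snoc (S : Type) (idx : S) (op : Monoid.law idx) n
    (h : n.-tuple T0) x (psi : seq T0 -> T0 -> S) :
  \big[op/idx]_(t < n.+1)
     psi (take t (snoc_tuple (h, x))) (tnth (snoc_tuple (h, x)) t)
  = op (\big[op/idx]_(t < n) psi (take t h) (tnth h t)) (psi h x).
Proof.
rewrite big_ord_recr /= -cats1; congr (op _ _).
- apply: eq_bigr => t _; rewrite takel_cat ?size_tuple 1?ltnW //.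
  by rewrite !(tnth_nth x) /= -cats1 nth_cat size_tuple ltn_ord.
- rewrite takel_cat ?size_tuple // take_oversize ?size_tuple //.
  by rewrite (tnth_nth x) /= -cats1 nth_cat size_tuple ltnn subnn.
Qed.

Definition hist_weight n (h : n.-tuple T0) : R :=
  \prod_(t < n) q (take t h) (tnth h t).

Definition hist_expect n (f : n.-tuple T0 -> R) : R :=
  \sum_(h : n.-tuple T0) hist_weight h * f h.

Lemma hist_expect_snoc n (f : n.+1.-tuple T0 -> R) :
  hist_expect f
  = \sum_(h : n.-tuple T0) hist_weight h * \sum_x q h x * f (snoc_tuple (h, x)).
Proof.
rewrite /hist_expect sum_tuple_snoc; apply: eq_bigr => h _.
rewrite mulr_sumr; apply: eq_bigr => x _.
by rewrite /hist_weight big_prefix_snoc mulrA.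
Qed.

Lemma hist_expect1 n : hist_expect (fun _ : n.-tuple T0 => 1) = 1.
Proof.
elim: n => [|n IH].
  rewrite /hist_expect (eq_bigr (fun _ => 1)) => [|h _].
    by rewrite sumr_const card_tuple expn0.
  by rewrite /hist_weight big_ord0 mulr1.
rewrite hist_expect_snoc -[RHS]IH; apply: eq_bigr => h _.
by under eq_bigr do rewrite mulr1; rewrite q_sum1.
Qed.

Lemma hist_expectD n (f : n.-tuple T0 -> R) (c : R) :
  hist_expect (fun h => f h + c) = hist_expect f + c.
Proof.
rewrite /hist_expect; under eq_bigr do rewrite mulrDr.
rewrite big_split /= -mulr_suml.
have -> : \sum_(h : n.-tuple T0) hist_weight h = 1.
  by rewrite -[RHS](hist_expect1 n); apply: eq_bigr => h _; rewrite mulr1.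
by rewrite mul1r.
Qed.

Lemma hist_expect_sum_snoc n (psi : seq T0 -> T0 -> R) :
  hist_expect (fun h : n.+1.-tuple T0 => \sum_(t < n.+1) psi (take t h) (tnth h t))
  = hist_expect (fun h : n.-tuple T0 => \sum_(t < n) psi (take t h) (tnth h t))
    + hist_expect (fun h : n.-tuple T0 => \sum_k q h k * psi h k).
Proof.
rewrite hist_expect_snoc /hist_expect -big_split; apply: eq_bigr => h _ /=.
rewrite -mulrDr; congr (_ * _).
under eq_bigr do rewrite big_prefix_snoc mulrDr.
by rewrite big_split /= -mulr_suml q_sum1 mul1r.
Qed.

Lemma hist_expect_tower n (phi : seq T0 -> T0 -> R) :
  hist_expect (fun h : n.-tuple T0 => \sum_(t < n) phi (take t h) (tnth h t))
  = hist_expect (fun h : n.-tuple T0 =>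
      \sum_(t < n) \sum_k q (take t h) k * phi (take t h) k).
Proof.
elim: n => [|n IH]; first by apply: eq_bigr => h _; rewrite !big_ord0.
rewrite hist_expect_sum_snoc.
rewrite (hist_expect_sum_snoc _ (fun s _ => \sum_k q s k * phi s k)) IH.
congr (_ + _); apply: eq_bigr => h _.
by rewrite -mulr_suml q_sum1 mul1r.
Qed.

Lemma hist_expect_le n (f g : n.-tuple T0 -> R) :
  (forall s k, 0 <= q s k) -> (forall h, f h <= g h) ->
  hist_expect f <= hist_expect g.
Proof.
move=> q_ge0 fg; apply: ler_sum => h _; apply: ler_wpM2l => //.
by apply: prodr_ge0 => t _.
Qed.

End HistoryExpectation.

Lemma Witer_take (R : realType) (K d : nat) xe ye ys kt upd n m (h : seq 'I_K) :
  (n <= m)%N -> @Witer R K d xe ye ys kt upd n (take m h) = Witer xe ye ys kt upd n h.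
Proof.
elim: n => [//|n IH] hnm /=.
by rewrite IH ?(ltnW hnm) // take_takel // ltnW.
Qed.

Section Prediction.
Variables (R : realType) (K d : nat) (gamma : R).
Hypothesis hK : (0 < K)%N.
Variables (ys : 'M[R]_(K, d) -> 'rV[R]_d -> 'I_K).
Implicit Types (W : 'M[R]_(K, d)) (x : 'rV[R]_d).

Lemma pprob_sum1 W x : \sum_k pprob gamma ys W x k = 1.
Proof.
rewrite /pprob big_split /= -mulr_sumr sumr_const card_ord.
rewrite (eq_bigr (fun k => (k == ys W x)%:R * 1)) => [|k _]; last by rewrite mulr1.
rewrite sum_delta mulr1; set c := Num.max _ _.
by rewrite -[c / _ *+ K]mulr_natr divfK ?subrK // pnatr_eq0 -lt0n hK.
Qed.

Lemma pprob_ge0 W x k : 0 <= gamma <= 1 -> 0 <= pprob gamma ys W x k.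
Proof.
move=> /andP[g0 g1]; set c := Num.max (gap W x) gamma.
have c0 : 0 <= c by rewrite le_max g0 orbT.
have c1 : c <= 1.
  by rewrite ge_max g1 andbT /gap lerBlDr lerDl le_max ler0n.
by rewrite /pprob -/c addr_ge0 // mulr_ge0 ?subr_ge0 ?invr_ge0 ?ler0n.
Qed.

End Prediction.

Definition gaptron_kernel (R : realType) (K d : nat) (gamma : R)
    (xe : seq 'I_K -> 'rV[R]_d) (ye : seq 'I_K -> 'I_K)
    (ys : 'M[R]_(K, d) -> 'rV[R]_d -> 'I_K)
    (kt : 'M[R]_(K, d) -> 'rV[R]_d -> 'I_K -> 'I_K)
    (upd : 'M[R]_(K, d) -> 'M[R]_(K, d) -> 'M[R]_(K, d))
    (s : seq 'I_K) (k : 'I_K) : R :=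
  pprob gamma ys (Witer xe ye ys kt upd (size s) s) (xe s) k.

Lemma gaptron_kernel_take (R : realType) (K d T : nat) (gamma : R) xe ye ys kt upd
    (h : T.-tuple 'I_K) (t : 'I_T) k :
  @gaptron_kernel R K d gamma xe ye ys kt upd (take t h) k
  = pprob gamma ys (Witer xe ye ys kt upd t h) (xe (take t h)) k.
Proof.
by rewrite /gaptron_kernel size_takel ?size_tuple 1?ltnW // Witer_take.
Qed.

Lemma Expect_hist (R : realType) (K d T : nat) (gamma : R) xe ye ys kt upd
    (f : T.-tuple 'I_K -> R) :
  Expect gamma xe ye ys kt upd f
  = hist_expect (@gaptron_kernel R K d gamma xe ye ys kt upd) f.
Proof.
apply: eq_bigr => h _; congr (_ * _).
by apply: eq_bigr => t _; rewrite gaptron_kernel_take.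
Qed.

Lemma sum_off_label (R : realType) (K : nat) (p : 'I_K -> R) (y : 'I_K) :
  \sum_k p k * (k != y)%:R = \sum_k p k - p y.
Proof.
rewrite [in RHS](bigD1 y) //= addrC addrK (bigD1 y) //= eqxx mulr0 add0r.
by apply: eq_bigr => k ->; rewrite mulr1.
Qed.

Unset Implicit Arguments. Set Strict Implicit.

Theorem theorem2 (R : realType) (K d T : nat) (X D : R)
  (hK : (2 <= K)%N) (hd : (1 <= d)%N) (hT : (1 <= T)%N)
  (hX : 0 < X) (hD : 0 < D)
  (xe : seq 'I_K -> 'rV[R]_d) (ye : seq 'I_K -> 'I_K)
  (hxe : forall h, vsqnorm (xe h) <= X ^+ 2)
  (ys : 'M[R]_(K, d) -> 'rV[R]_d -> 'I_K) (hys : is_argmax_rule ys)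
  (kt : 'M[R]_(K, d) -> 'rV[R]_d -> 'I_K -> 'I_K) (hkt : is_argmax_other_rule kt)
  (upd : 'M[R]_(K, d) -> 'M[R]_(K, d) -> 'M[R]_(K, d))
  (hupd : is_prox_update (geta K X) D upd)
  (U : 'M[R]_(K, d)) (hU : sqnorm U <= D ^+ 2) :
  Expect (T := T) 0 xe ye ys kt upd (@mistakes R K T ye)
  <= Expect (T := T) 0 xe ye ys kt upd (cum_loss (T := T) xe ye ys kt upd U)
     + (K%:R ^+ 2 * X ^+ 2 * sqnorm U) / (2 * (K%:R - 1)).
Proof.
have K0 : (0 < K)%N by apply: leq_trans hK.
set q := gaptron_kernel 0 xe ye ys kt upd.
have q_sum1 (s : seq 'I_K) : \sum_k q s k = 1 by apply: pprob_sum1.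
rewrite !Expect_hist /mistakes (hist_expect_tower q_sum1 _ (fun s k => (k != ye s)%:R)).
rewrite -hist_expectD //; apply: hist_expect_le => [s k|h].
  by apply: pprob_ge0; rewrite lexx ler01.
under eq_bigr do rewrite sum_off_label q_sum1 /q gaptron_kernel_take.
exact: pathwise_bound.
Qed.
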